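(* Let $\varepsilon>0$ and let $P,Q$ be distributions on $\mathcal{X}$ with disjoint supports. Then $\operatorname{scLLR}_{-\varepsilon',\varepsilon}$ and $\operatorname{ncLLR}_{-\varepsilon',\varepsilon}$ are asymptotically optimal (up to constant factors in sample complexity) among all $\varepsilon$-differentially private tests, and $$\mathit{SC}^{P,Q}(\operatorname{scLLR}_{-\varepsilon',\varepsilon})=\mathit{SC}^{P,Q}(\operatorname{ncLLR}_{-\varepsilon',\varepsilon})=\Theta(1/\varepsilon).$$
   Context: Distributions are identified with densities. A randomized test $K:\mathcal{X}^*\to\{\text{''}P\text{''},\text{''}Q\text{''}\}$ is $\varepsilon$-differentially private if for every $n$, all $x,x'\in\mathcal{X}^n$ differing in one entry and every output $o$, $\Pr[K(x)=o]\le e^{\varepsilon}\Pr[K(x')=o]$. $\mathit{SC}^{P,Q}(K)$ is the least $n_0$ such that $\Pr_{x\sim P^n}[K(x)=\text{''}P\text{''}]-\Pr_{x\sim Q^n}[K(x)=\text{''}P\text{''}]\ge2/3$ for all $n\ge n_0$. $\tau=\max\{\int\max\{P-e^{\varepsilon}Q,0\},\int\max\{Q-e^{\varepsilon}P,0\}\}$, with the standing convention (swap names otherwise) that $\tau=\int\max\{P-e^{\varepsilon}Q,0\}$; $\varepsilon'\in[0,\varepsilon]$ is the largest value with $\int\max\{Q(x)-e^{\varepsilon'}P(x),0\}\mathrm{d}x=\tau$. For $a\le b$, $[z]_a^b=\max(a,\min(z,b))$, and $\operatorname{cLLR}_{a,b}(x_1,\dots,x_n)=\sum_i[\log\frac{P(x_i)}{Q(x_i)}]_a^b$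 with $\log(p/0)=+\infty$, $\log(0/q)=-\infty$. $\operatorname{scLLR}_{a,b}(x)$ outputs ''$P$'' with probability $\frac{\exp(\frac12\operatorname{cLLR}_{a,b}(x))}{1+\exp(\frac12\operatorname{cLLR}_{a,b}(x))}$ and ''$Q$'' otherwise. $\operatorname{ncLLR}_{-\varepsilon',\varepsilon}(x)$ outputs ''$P$'' if $\operatorname{cLLR}_{-\varepsilon',\varepsilon}(x)+Z>0$ and ''$Q$'' otherwise, with fresh $Z\sim\mathrm{Lap}(2)$. *)

From HB Require Import structures.
From mathcomp Require Import all_boot all_order all_algebra.
From mathcomp Require Import all_classical all_reals all_analysis.
Set Implicit Arguments. Unset Strict Implicit. Unset Printing Implicit Defensive.
Import Order.TTheory GRing.Theory Num.Theory.
Import numFieldNormedType.Exports.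
Local Open Scope classical_set_scope.
Local Open Scope ring_scope.

Section Defs.
Context {R : realType} {d : measure_display} {X : measurableType d}.
Variable mu : {measure set X -> \bar R}.

Definition is_density (p : X -> R) : Prop :=
  measurable_fun setT p /\ (forall x, 0 <= p x) /\
  (\int[mu]_x (p x)%:E = 1)%E.

(* expectation of f : X^n -> R under the product distribution p^n,
   written as an iterated integral (first coordinate outermost) *)
Fixpoint prod_expect (p : X -> R) (n : nat) : (n.-tuple X -> R) -> \bar R :=
  match n return (n.-tuple X -> R) -> \bar R with
  | 0 => fun f => (f [tuple])%:E
  | k.+1 => fun f =>
      (\int[mu]_x ((p x)%:E * prod_expect p (fun t : k.-tuple X => f (cons_tuple x t))))%E
  end.

(* A randomized test K : X^* -> {"P","Q"} is represented by
   K n x = Pr[K(x) = "P"] in [0,1] for x in X^n. *)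
Definition rtest := forall n : nat, n.-tuple X -> R.

Definition is_rtest (K : rtest) : Prop :=
  forall n (x : n.-tuple X), 0 <= K n x <= 1.

Definition neighbors n (x x' : n.-tuple X) : Prop :=
  exists i : 'I_n, forall j : 'I_n, j != i -> tnth x j = tnth x' j.

(* epsilon-DP, for both outputs "P" (prob K) and "Q" (prob 1 - K) *)
Definition is_DP (eps : R) (K : rtest) : Prop :=
  is_rtest K /\
  forall n (x x' : n.-tuple X), neighbors x x' ->
    K n x <= expR eps * K n x' /\ 1 - K n x <= expR eps * (1 - K n x').

Definition advantage (p q : X -> R) (K : rtest) (n : nat) : \bar R :=
  (prod_expect p (K n) - prod_expect q (K n))%E.

Definition succeeds_from (p q : X -> R) (K : rtest) (n0 : nat) : Prop :=
  forall n, (n0 <= n)%N -> ((2 / 3 : R)%:E <= advantage p q K n)%E.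

Definition SC_is (p q : X -> R) (K : rtest) (m : nat) : Prop :=
  succeeds_from p q K m /\ forall m', succeeds_from p q K m' -> (m <= m')%N.

Definition hockey (p q : X -> R) (e : R) : \bar R :=
  (\int[mu]_x (Num.max (p x - expR e * q x) 0)%:E)%E.

Definition tau (p q : X -> R) (eps : R) : \bar R :=
  Order.max (hockey p q eps) (hockey q p eps).

Definition eps' (p q : X -> R) (eps : R) : R :=
  sup [set e : R | 0 <= e <= eps /\ hockey q p e = tau p q eps].

Definition clamp (a b z : R) : R := Num.max a (Num.min z b).

(* [log (p x / q x)]_a^b with log(p/0) = +oo, log(0/q) = -oo;
   the undefined case p x = q x = 0 is (arbitrarily) given log = 0. *)
Definition clip_llr (p q : X -> R) (a b : R) (x : X) : R :=
  if p x == 0 then (if q x == 0 then clamp a b 0 else a)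
  else if q x == 0 then b
  else clamp a b (ln (p x / q x)).

Definition cLLR (p q : X -> R) (a b : R) n (x : n.-tuple X) : R :=
  \sum_(i < n) clip_llr p q a b (tnth x i).

Definition scLLR_test (p q : X -> R) (a b : R) : rtest :=
  fun n x => expR (cLLR p q a b x / 2) / (1 + expR (cLLR p q a b x / 2)).

Definition lap2_density (z : R) : R := expR (- `|z| / 2) / 4.

Definition ncLLR_test (p q : X -> R) (a b : R) : rtest :=
  fun n x => fine (\int[@lebesgue_measure R]_(z in [set z : R | (0 < cLLR p q a b x + z)%R])
                     (lap2_density z)%:E)%E.

Definition scLLR (p q : X -> R) (eps : R) : rtest :=
  scLLR_test p q (- eps' p q eps) eps.
Definition ncLLR (p q : X -> R) (eps : R) : rtest :=
  ncLLR_test p q (- eps' p q eps) eps.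

End Defs.

(* With disjoint supports tau = 1 for every exponent, so eps' = eps, and every
   sample has clipped log-likelihood ratio eps under P and -eps under Q.  Both
   tests are therefore functions of the deterministic statistic n * eps (under
   P^n) or -(n * eps) (under Q^n): scLLR has advantage
   (e^(n eps/2) - 1) / (e^(n eps/2) + 1) and ncLLR has advantage
   1 - e^(-n eps/2), which reach 2/3 exactly when n eps >= 2 ln 5, resp.
   n eps >= 2 ln 3.  Conversely, group privacy gives K(x) <= e^(n eps) K(y) for
   any eps-DP test and all x, y in X^n, which bounds its advantage by
   1 - e^(-2 n eps); success then forces n eps >= 1/3. *)

From HB Require Import structures.
From mathcomp Require Import all_boot all_order all_algebra.
From mathcomp Require Import all_classical all_reals all_analysis.
From mathcomp Require Import measurable_realfun ring lra.
Import Order.TTheory GRing.Theory Num.Theory.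
Import numFieldNormedType.Exports.
Local Open Scope classical_set_scope.
Local Open Scope ring_scope.

Section laplace.
Context {R : realType}.
Local Notation leb := (@lebesgue_measure R).

Lemma derive1_scaled_expR (a k x : R) :
  derive1 (fun y => a * expR (k * y)) x = a * (k * expR (k * x)).
Proof. by rewrite derive1E derive_val /GRing.scale /= mulr1 (mulrC _ k). Qed.

Lemma continuous_scaled_expR (a k : R) : continuous (fun y => a * expR (k * y)).
Proof. by move=> x; apply/differentiable_continuous/derivable1_diffP/ex_derive. Qed.

Lemma lap2_density_ge0 (z : R) : 0 <= lap2_density z.
Proof. by rewrite /lap2_density divr_ge0 ?expR_ge0. Qed.

Lemma measurable_lap2_density (D : set R) :
  measurable_fun D (fun z => (@lap2_density R z)%:E).
Proof.
apply/measurable_EFinP/measurable_funTS; apply: measurable_funM => //.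
apply: measurableT_comp => //; apply: measurable_funM => //.
exact: measurableT_comp.
Qed.

Lemma lap2_integral_itvcy (c : R) : 0 <= c ->
  (\int[leb]_(z in `[c, +oo[) (lap2_density z)%:E = (expR (- c / 2) / 2)%:E)%E.
Proof.
move=> c0.
transitivity (\int[leb]_(z in `[c, +oo[) (4^-1 * expR (- 2^-1 * z))%:E)%E.
  apply: eq_integral => z; rewrite inE /= in_itv /= andbT => cz.
  rewrite /lap2_density ger0_norm ?(le_trans c0 cz) //.
  by rewrite mulrC !mulNr (mulrC z).
have vanish : (fun y => - 2^-1 * expR (- 2^-1 * y)) x @[x --> +oo] --> (0 : R).
  rewrite -(mulr0 (- 2^-1)); apply: cvgM; first exact: cvg_cst.
  rewrite (_ : (fun y => expR (- 2^-1 * y)) = (fun y => expR (- y)) \o ( *%R 2^-1)).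
    apply: (@cvg_comp _ _ _ _ _ _ (pinfty_nbhs R)); last exact: cvgr_expR.
    by apply: gt0_cvgMry => //; exact: cvg_id.
  by apply: funext => y /=; rewrite mulNr.
rewrite (ge0_continuous_FTC2y _ _ vanish).
- rewrite sub0e mulNr -EFinN opprK mulrC; congr (expR _ * _)%:E; ring.
- by move=> x _; rewrite mulr_ge0 ?expR_ge0.
- exact/continuous_subspaceT/continuous_scaled_expR.
- by move=> x _; exact: ex_derive.
- exact/cvg_at_right_filter/continuous_scaled_expR.
- by move=> x _; rewrite derive1_scaled_expR mulrA; congr (_ * _); field.
Qed.

Lemma lap2_integral_itvcc (c : R) : 0 < c ->
  (\int[leb]_(z in `[(- c)%R, 0%R]) (lap2_density z)%:E =
   ((1 - expR (- c / 2)) / 2)%:E)%E.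
Proof.
move=> c0.
transitivity (\int[leb]_(z in `[(- c)%R, 0%R]) (4^-1 * expR (2^-1 * z))%:E)%E.
  apply: eq_integral => z; rewrite inE /= in_itv /= => /andP[_ z0].
  by rewrite /lap2_density ler0_norm // mulrC opprK (mulrC z).
rewrite (@continuous_FTC2 _ _ (fun y => 2^-1 * expR (2^-1 * y)) (- c) 0).
- by rewrite mulr0 expR0 -EFinB (mulrC 2^-1 (- c)); congr (_%:E); ring.
- by rewrite oppr_lt0.
- exact/continuous_subspaceT/continuous_scaled_expR.
- split; first by move=> x _; exact: ex_derive.
  + exact/cvg_at_right_filter/continuous_scaled_expR.
  + exact/cvg_at_left_filter/continuous_scaled_expR.
- by move=> x _; rewrite derive1_scaled_expR mulrA; congr (_ * _); field.
Qed.

Definition lap2_exceed (c : R) : R :=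
  fine (\int[leb]_(z in [set z : R | (0 < c + z)%R]) (lap2_density z)%:E)%E.

Lemma lap2_exceed_ge0 (c : R) : 0 <= lap2_exceed c.
Proof.
by rewrite fine_ge0 // integral_ge0 // => z _; rewrite lee_fin lap2_density_ge0.
Qed.

Lemma ge0_lap2_exceedN (c : R) : 0 <= c -> lap2_exceed (- c) = expR (- c / 2) / 2.
Proof.
move=> c0; rewrite /lap2_exceed.
have -> : [set z : R | 0 < - c + z] = `]c, +oo[%classic.
  by apply/seteqP; split => z; rewrite /= in_itv /= andbT addrC subr_gt0.
rewrite integral_itv_obnd_cbnd ?lap2_integral_itvcy //.
exact: measurable_lap2_density.
Qed.

Lemma gt0_lap2_exceed (c : R) : 0 < c -> lap2_exceed c = 1 - expR (- c / 2) / 2.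
Proof.
move=> c0; rewrite /lap2_exceed.
have -> : [set z : R | 0 < c + z] = `]- c, 0[%classic `|` `[0, +oo[%classic.
  apply/seteqP; split => z /=; rewrite !in_itv /= ?andbT.
    by have [z0|z0] := ltP z 0; [left; apply/andP; split|right]; lra.
  by case=> [/andP[]|]; lra.
rewrite ge0_integral_setU //=; last 3 first.
- exact: measurable_lap2_density.
- by move=> z _; rewrite lee_fin lap2_density_ge0.
- by apply/disj_setPS => z [] /=; rewrite !in_itv /= andbT => /andP[_]; lra.
rewrite integral_itv_obnd_cbnd; last exact: measurable_lap2_density.
rewrite integral_itv_bndo_bndc; last exact: measurable_lap2_density.
rewrite lap2_integral_itvcc // lap2_integral_itvcy // -EFinD /=.
by rewrite oppr0 mul0r expR0; field.
Qed.

Lemma lap2_exceed_sub (c : R) : 0 <= c ->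
  lap2_exceed c - lap2_exceed (- c) = 1 - expR (- c / 2).
Proof.
rewrite le_eqVlt => /predU1P[<-|c0]; first by rewrite oppr0 subrr mul0r expR0 subrr.
by rewrite gt0_lap2_exceed // ge0_lap2_exceedN ?ltW //; field.
Qed.

End laplace.

Section link_functions.
Context {R : realType}.

Lemma le_expR_half (b c : R) : 0 < b -> (b <= expR (c / 2)) = (2 * ln b <= c).
Proof. by move=> b0; rewrite -{1}(lnK b0) ler_expR ler_pdivlMr // mulrC. Qed.

Lemma twice_ln_ge1 (b : R) : 3 <= b -> 1 <= 2 * ln b.
Proof.
move=> b3; rewrite -ler_pdivrMl // -[X in X <= _]expRK.
rewrite ler_ln ?posrE ?expR_gt0 //; last lra.
have := expR_ge1Dx (- 2^-1 : R); rewrite mulr1.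
have : expR (2^-1) * expR (- 2^-1) = 1 :> R by rewrite -expRD subrr expR0.
have := expR_gt0 (2^-1 : R); nra.
Qed.

Lemma twice_ln_le8 (b : R) : 0 < b -> b <= 5 -> 2 * ln b <= 8.
Proof.
move=> b0 b5; rewrite -le_expR_half // (le_trans b5) //.
by have := expR_ge1Dx (8 / 2 : R); lra.
Qed.

Definition logistic_half (c : R) : R := expR (c / 2) / (1 + expR (c / 2)).

Lemma logistic_half_ge0 (c : R) : 0 <= logistic_half c.
Proof. by rewrite /logistic_half divr_ge0 ?addr_ge0 ?expR_ge0. Qed.

Lemma logistic_half_sub_ge_iff (c : R) :
  (2/3 <= logistic_half c - logistic_half (- c)) = (2 * ln 5 <= c).
Proof.
rewrite -le_expR_half // /logistic_half mulNr expRN.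
set v := expR (c / 2); have v0 : 0 < v := expR_gt0 _.
have -> : v / (1 + v) - v^-1 / (1 + v^-1) = (v - 1) / (v + 1).
  by field; rewrite ?lt0r_neq0 ?addr_gt0 ?invr_gt0 // addrC addr_gt0.
by rewrite ler_pdivlMr ?addr_gt0 //; apply/idP/idP; lra.
Qed.

Lemma lap2_exceed_sub_ge_iff (c : R) : 0 <= c ->
  (2/3 <= lap2_exceed c - lap2_exceed (- c)) = (2 * ln 3 <= c).
Proof.
move=> c0; rewrite lap2_exceed_sub // -le_expR_half // mulNr expRN.
set v := expR (c / 2); have v0 : 0 < v := expR_gt0 _.
have vV : v * v^-1 = 1 by rewrite mulfV ?lt0r_neq0.
have vV0 : 0 < v^-1 by rewrite invr_gt0.
by apply/idP/idP => h; nra.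
Qed.

End link_functions.

Lemma EFin_between {R : realType} {e : \bar R} {lo hi : R} :
  (lo%:E <= e <= hi%:E)%E -> exists2 r, e = r%:E & lo <= r <= hi.
Proof.
case: e => [r| |] //=; first by rewrite !lee_fin => h; exists r.
by rewrite leye_eq andbF.
Qed.

Lemma sub_le_one_subX2 {R : realType} {a b c w : R} : 0 < w <= 1 -> a <= 1 ->
  a * w <= c -> c * w <= b -> a - b <= 1 - w ^+ 2.
Proof.
move=> /andP[w0 w1] a1 ac cb.
have acw : a * w * w <= c * w by rewrite ler_wpM2r // ltW.
have ww : w * w <= 1 by nra.
by rewrite expr2; nra.
Qed.

Section tests.
Context {R : realType} {d : measure_display} {X : measurableType d}.
Variable mu : {measure set X -> \bar R}.

Lemma cLLR_cons (p q : X -> R) a b k x (t : k.-tuple X) :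
  cLLR p q a b [tuple of x :: t] = clip_llr p q a b x + cLLR p q a b t.
Proof.
rewrite /cLLR big_ord_recl tnth0; congr (_ + _).
by apply: eq_bigr => i _; rewrite tnthS.
Qed.

Lemma integral_density_mulr (p : X -> R) (c : R) : is_density mu p -> 0 <= c ->
  (\int[mu]_x ((p x)%:E * c%:E) = c%:E)%E.
Proof.
move=> [mp [p0 ip]] c0; rewrite ge0_integralZr //.
- by rewrite ip mul1e.
- exact/measurable_EFinP.
- by move=> x _; rewrite lee_fin.
Qed.

(* No measurability is needed: the integral of a nonnegative function is the
   supremum of the integrals of its simple minorants. *)
Lemma ge0_le_integral_nonmeas (f g : X -> \bar R) : (forall x, 0 <= f x)%E ->
  (forall x, f x <= g x)%E -> (\int[mu]_x f x <= \int[mu]_x g x)%E.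
Proof.
move=> f0 fg; have g0 x : (0 <= g x)%E by apply: le_trans (f0 x) (fg x).
rewrite !ge0_integralE //; apply: ereal_sup_le => _ [h hf <-].
by exists h => // x; apply: le_trans (hf x) _; rewrite /patch /=; case: ifP.
Qed.

Lemma prod_expect_bounds {p : X -> R} {lo hi : R} : is_density mu p -> 0 <= lo ->
  forall k (f : k.-tuple X -> R), (forall t, lo <= f t <= hi) ->
  (lo%:E <= prod_expect mu p f <= hi%:E)%E.
Proof.
move=> pd lo0; elim=> [|k IH] f fb /=; first by rewrite !lee_fin fb.
have hi0 : 0 <= hi.
  by have /andP[lof fhi] := fb [tuple of nseq k.+1 point]; lra.
have IHx x : (lo%:E <= prod_expect mu p (fun t : k.-tuple X => f [tuple of x :: t])
               <= hi%:E)%E.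
  by apply: IH => t; exact: fb.
have p0 x : (0 <= (p x)%:E)%E by rewrite lee_fin; case: pd => _ [].
apply/andP; split.
  rewrite -[X in (X <= _)%E](@integral_density_mulr p lo) //.
  apply: ge0_le_integral_nonmeas => x; first by rewrite mule_ge0 // lee_fin.
  by apply: lee_wpmul2l => //; case/andP: (IHx x).
rewrite -[X in (_ <= X)%E](@integral_density_mulr p hi) //.
apply: ge0_le_integral_nonmeas => x.
  rewrite mule_ge0 //; case/andP: (IHx x) => + _.
  by apply: le_trans; rewrite lee_fin.
by apply: lee_wpmul2l => //; case/andP: (IHx x).
Qed.

Lemma prod_expect_cLLR_const {r p q : X -> R} {a b v : R} {h : R -> R} :
  is_density mu r -> (forall c, 0 <= h c) ->
  (forall x, r x != 0 -> clip_llr p q a b x = v) ->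
  forall k c, prod_expect mu r (fun t : k.-tuple X => h (c + cLLR p q a b t))
     = (h (c + k%:R * v))%:E.
Proof.
move=> rd h0 rv; elim=> [|k IH] c /=; first by rewrite /cLLR big_ord0 mul0r.
rewrite -(@integral_density_mulr r _ rd (h0 _)); apply: eq_integral => x _.
have [->|rx] := eqVneq (r x) 0; first by rewrite !mul0e.
congr (_ * _)%E; under eq_fun do rewrite cLLR_cons rv // addrA.
by rewrite IH -natr1 mulrDl mul1r addrA addrAC.
Qed.

Lemma DP_group_privacy (eps : R) (K : @rtest R d X) : is_DP eps K -> 0 <= eps ->
  forall n (x y : n.-tuple X), K n x <= expR (n%:R * eps) * K n y.
Proof.
move=> [_ DP] eps0 n x y.
pose z j : n.-tuple X := [tuple if (i < j)%N then tnth y i else tnth x i | i < n].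
have z0 : z 0%N = x by apply: eq_from_tnth => i; rewrite tnth_mktuple.
have zn : z n = y by apply: eq_from_tnth => i; rewrite tnth_mktuple ltn_ord.
suff H j : (j <= n)%N -> K n x <= expR (j%:R * eps) * K n (z j) by rewrite -zn H.
elim: j => [|j IH] jn; first by rewrite mul0r expR0 mul1r z0.
have zz : neighbors (z j) (z j.+1).
  exists (Ordinal jn) => i /eqP ij.
  rewrite !tnth_mktuple [in RHS]ltnS [in RHS]leq_eqVlt.
  by have -> : (nat_of_ord i == j) = false by apply/eqP => h; apply/ij/val_inj.
apply: (le_trans (IH (ltnW jn))).
rewrite -natr1 mulrDl mul1r expRD -mulrA ler_wpM2l ?expR_ge0 //.
exact: (DP _ _ _ zz).1.
Qed.

(* Compare K on every tuple with its value c on one fixed tuple: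
   E_P[K] <= e^(n eps) c and E_Q[K] >= e^(-n eps) c. *)
Lemma DP_advantage_sample_bound {p q : X -> R} {eps : R} {K : @rtest R d X}
    {n : nat} :
  is_density mu p -> is_density mu q -> is_DP eps K -> 0 <= eps ->
  ((2/3 : R)%:E <= advantage mu p q K n)%E -> 1/3 <= n%:R * eps.
Proof.
move=> pd qd DP eps0; have Kb := DP.1.
pose c := K n [tuple of nseq n point].
pose w := expR (- (n%:R * eps)).
have w01 : 0 < w <= 1 by rewrite expR_gt0 expR_le1 oppr_le0 mulr_ge0.
have c0 : 0 <= c by case/andP: (Kb n [tuple of nseq n point]).
have [a ea /andP[_ a1]] := EFin_between (prod_expect_bounds pd (lexx 0) _ _ (Kb n)).
have : (0%:E <= prod_expect mu p (K n) <= (c / w)%:E)%E.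
  apply: prod_expect_bounds => // t; case/andP: (Kb n t) => -> _ /=.
  by rewrite /w expRN invrK mulrC DP_group_privacy.
rewrite ea !lee_fin => /andP[_ ac].
have : ((c * w)%:E <= prod_expect mu q (K n) <= 1%:E)%E.
  apply: prod_expect_bounds => //.
    by rewrite mulr_ge0 //; lra.
  move=> t; case/andP: (Kb n t) => _ ->; rewrite andbT.
  rewrite -ler_pdivlMr ?expR_gt0 // /w expRN invrK mulrC.
  exact: DP_group_privacy.
move=> /EFin_between[b eb /andP[cb _]].
rewrite /advantage ea eb -EFinD lee_fin => adv.
have aw : a * w <= c by rewrite -ler_pdivlMr //; case/andP: w01.
have := sub_le_one_subX2 w01 a1 aw cb.
have : 1 - (n%:R * eps) * 2 <= w ^+ 2.
  by rewrite /w expr2 -expRD; apply: le_trans (expR_ge1Dx _); lra.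
lra.
Qed.

Lemma SC_is_threshold {p q : X -> R} {K : @rtest R d X} {eps t : R} :
  0 < eps -> 0 <= t ->
  (forall n, ((2/3 : R)%:E <= advantage mu p q K n)%E <-> t <= n%:R * eps) ->
  exists2 n0, SC_is mu p q K n0 & t / eps <= n0%:R <= t / eps + 1.
Proof.
move=> eps0 t0 advP.
have succP n0 : succeeds_from mu p q K n0 <-> t <= n0%:R * eps.
  split=> [/(_ n0 (leqnn _))/advP //|tn0 n n0n]; apply/advP.
  by apply: le_trans tn0 _; rewrite ler_pM2r ?ler_nat.
pose N := (Num.truncn (t / eps)).+1.
have [tN Nt] : t <= N%:R * eps /\ N%:R <= t / eps + 1.
  have /andP[lo hi] := truncn_itv (divr_ge0 t0 (ltW eps0)).
  by rewrite -ler_pdivrMr // /N -natr1 lerD2r natr1; split; [exact: ltW|].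
have [n0 tn0 min_n0] := ex_minnP (ex_intro (fun n => t <= n%:R * eps) N tN).
exists n0.
  by split=> [|m /succP]; [exact/succP|exact: min_n0].
by rewrite ler_pdivrMr // tn0 (le_trans _ Nt) // ler_nat min_n0.
Qed.

Lemma hockey_disjoint (f g : X -> R) e : is_density mu f -> is_density mu g ->
  (forall x, f x = 0 \/ g x = 0) -> hockey mu f g e = 1%E.
Proof.
move=> [_ [f0 <-]] [_ [g0 _]] fg; apply: eq_integral => x _; congr EFin.
case: (fg x) => ->; last by rewrite mulr0 subr0 max_l.
by rewrite sub0r max_r // oppr_le0 mulr_ge0 ?expR_ge0.
Qed.

Section disjoint_supports.
Context {p q : X -> R}.
Hypotheses (pd : is_density mu p) (qd : is_density mu q)
  (disj : forall x, p x = 0 \/ q x = 0).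

Lemma eps'_disjoint eps : 0 <= eps -> eps' mu p q eps = eps.
Proof.
have hpq e : hockey mu p q e = 1%E by exact: hockey_disjoint.
have hqp e : hockey mu q p e = 1%E.
  by apply: hockey_disjoint => // x; case: (disj x); [right|left].
move=> eps0; rewrite /eps' /tau hpq hqp maxxx -[RHS](sup_itvcc eps0).
by congr sup; apply/seteqP; split=> e /=; rewrite in_itv /= hqp; [case|].
Qed.

Lemma clip_llr_supp_p a b x : p x != 0 -> clip_llr p q a b x = b.
Proof.
move=> px; rewrite /clip_llr (negbTE px).
by case: (disj x) => [/eqP|->]; [rewrite (negbTE px)|rewrite eqxx].
Qed.

Lemma clip_llr_supp_q a b x : q x != 0 -> clip_llr p q a b x = a.
Proof.
move=> qx; rewrite /clip_llr.
by case: (disj x) => [->|/eqP]; [rewrite eqxx (negbTE qx)|rewrite (negbTE qx)].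
Qed.

Lemma advantage_clipped_llr_test eps (h : R -> R) (K : @rtest R d X) :
  0 <= eps -> (forall c, 0 <= h c) ->
  (forall n t, K n t = h (cLLR p q (- eps' mu p q eps) eps t)) ->
  forall n, advantage mu p q K n = (h (n%:R * eps) - h (- (n%:R * eps)))%:E.
Proof.
move=> eps0 h0 Kh n; rewrite /advantage.
have -> : K n = (fun t => h (0 + cLLR p q (- eps' mu p q eps) eps t)).
  by apply: funext => t; rewrite Kh add0r.
rewrite (prod_expect_cLLR_const pd h0 (@clip_llr_supp_p _ _)).
rewrite (prod_expect_cLLR_const qd h0 (@clip_llr_supp_q _ _)).
by rewrite eps'_disjoint // !add0r mulrN -EFinD.
Qed.

Lemma scLLR_advantage_ge_iff eps : 0 <= eps -> forall n,
  ((2/3 : R)%:E <= advantage mu p q (scLLR mu p q eps) n)%E <->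
  2 * ln 5 <= n%:R * eps.
Proof.
move=> eps0 n; rewrite (@advantage_clipped_llr_test eps logistic_half) //.
  by rewrite lee_fin logistic_half_sub_ge_iff.
exact: logistic_half_ge0.
Qed.

Lemma ncLLR_advantage_ge_iff eps : 0 <= eps -> forall n,
  ((2/3 : R)%:E <= advantage mu p q (ncLLR mu p q eps) n)%E <->
  2 * ln 3 <= n%:R * eps.
Proof.
move=> eps0 n; rewrite (@advantage_clipped_llr_test eps lap2_exceed) //.
  by rewrite lee_fin lap2_exceed_sub_ge_iff // mulr_ge0.
exact: lap2_exceed_ge0.
Qed.

End disjoint_supports.
End tests.

Lemma sample_count_bounds {R : realType} {eps t : R} {n : nat} :
  0 < eps -> 1 <= t -> t <= 8 -> t / eps <= n%:R <= t / eps + 1 ->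
  (eps <= 1 -> 1 / eps <= n%:R <= 9 / eps) /\
  (forall m : nat, 1/3 <= m%:R * eps -> n%:R <= 25 * m%:R :> R).
Proof.
move=> eps0 t1 t8; rewrite -!(mulrC eps^-1) => /andP[tn nt].
have epsV0 : 0 < eps^-1 by rewrite invr_gt0.
have t8epsV : t * eps^-1 <= 8 * eps^-1 by rewrite ler_pM2r.
split=> [eps1|m meps].
  have epsV1 : 1 <= eps^-1 by rewrite invf_ge1.
  have t1epsV : 1 * eps^-1 <= t * eps^-1 by rewrite ler_pM2r.
  by apply/andP; split; lra.
have epsV_le3m : eps^-1 <= 3 * m%:R.
  by have := ler_wpM2r (ltW epsV0) meps; rewrite mulfK ?gt_eqF //; lra.
have m1 : 1 <= m%:R :> R.
  by case: m meps {epsV_le3m} => [|m]; rewrite ?mul0r ?ler1n //; lra.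
lra.
Qed.

Theorem theoremC1 (R : realType) :
  exists c1 c2 C : R, [/\ 0 < c1, 0 < c2, 0 < C &
  forall (d : measure_display) (X : measurableType d)
         (mu : {measure set X -> \bar R}) (p q : X -> R) (eps : R),
    0 < eps -> is_density mu p -> is_density mu q ->
    (forall x, p x = 0 \/ q x = 0) ->
    exists n1 n2 : nat,
      [/\ SC_is mu p q (scLLR mu p q eps) n1,
          SC_is mu p q (ncLLR mu p q eps) n2,
          (eps <= 1 ->
             [/\ c1 / eps <= n1%:R, n1%:R <= c2 / eps,
                 c1 / eps <= n2%:R & n2%:R <= c2 / eps]) &
          (forall (K : @rtest R d X) (m : nat), is_DP eps K -> SC_is mu p q K m ->
             n1%:R <= C * m%:R /\ n2%:R <= C * m%:R)]].
Proof.
exists 1, 9, 25; split => // d X mu p q eps eps0 pd qd disj.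
have ln3_ge1 : 1 <= 2 * ln (3 : R) by apply: twice_ln_ge1; lra.
have ln3_le8 : 2 * ln (3 : R) <= 8 by apply: twice_ln_le8; lra.
have ln5_ge1 : 1 <= 2 * ln (5 : R) by apply: twice_ln_ge1; lra.
have ln5_le8 : 2 * ln (5 : R) <= 8 by apply: twice_ln_le8; lra.
have [n1 SC1 /(sample_count_bounds eps0 ln5_ge1 ln5_le8)[small1 opt1]] :=
  SC_is_threshold mu eps0 (le_trans ler01 ln5_ge1)
    (scLLR_advantage_ge_iff mu pd qd disj eps (ltW eps0)).
have [n2 SC2 /(sample_count_bounds eps0 ln3_ge1 ln3_le8)[small2 opt2]] :=
  SC_is_threshold mu eps0 (le_trans ler01 ln3_ge1)
    (ncLLR_advantage_ge_iff mu pd qd disj eps (ltW eps0)).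
exists n1, n2; split => // [eps1|K m DP [SCm _]].
  by case/andP: (small1 eps1) => ? ?; case/andP: (small2 eps1).
have := DP_advantage_sample_bound mu pd qd DP (ltW eps0) (SCm m (leqnn m)).
by split; [exact: opt1|exact: opt2].
Qed.
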